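(* Let $n\geq 2$, let $X\subset\mathbb{R}^n$ be finite, equipped with the Euclidean metric $d$, let $k\in\mathbb{N}$ and $\epsilon>0$, and let $S\in\mathcal{Q}(\epsilon)$. If $|S^1_X|>k$, then $S_X\subset\mathcal{C}(\epsilon)$. If $|S^{\mathfrak{m}}_X|\leq k$ or $S_X=\emptyset$, then $S_X\subset\mathcal{N}(\epsilon)$.
   Context: $\mathcal{Q}(\epsilon)$ is the collection of closed cubes $\{(x_1,\dots,x_n)\in\mathbb{R}^n: j_i\frac{\epsilon}{2\sqrt n}\le x_i\le (j_i+1)\frac{\epsilon}{2\sqrt n},\ i=1,\dots,n\}$ for $j\in\mathbb{Z}^n$. For a cube $S\in\mathcal{Q}(\epsilon)$ and an integer $m\geq 0$, $S^m=\{x\in\mathbb{R}^n:\max_i|x_i-s_i|\le m\frac{\epsilon}{2\sqrt n}\text{ for some } s\in S\}$. For $Y,A\subset\mathbb{R}^n$, $Y_A=Y\cap A$; thus $S_X=S\cap X$, $S^m_X=S^m\cap X$. $\mathfrak{m}$ is the smallest integer with $\mathfrak{m}\geq 2\sqrt n$. The set of core points is $\mathcal{C}(\epsilon)=\{p\in X: |\{q\in X: d(p,q)\le\epsilon\}|>k\}$ and the set of noise points is $\mathcal{N}(\epsilon)=X\setminus\mathcal{C}(\epsilon)$. *)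

From HB Require Import structures.
From mathcomp Require Import all_boot all_order all_algebra.
From mathcomp Require Import finmap.
From mathcomp Require Import boolp reals.
Set Implicit Arguments. Unset Strict Implicit. Unset Printing Implicit Defensive.
Import Order.TTheory GRing.Theory Num.Theory.
Local Open Scope ring_scope.
Local Open Scope fset_scope.

Section Defs.
Variables (R : realType) (n : nat).

Definition edist (x y : 'rV[R]_n) : R :=
  Num.sqrt (\sum_(i < n) (x 0 i - y 0 i) ^+ 2).

Definition side (eps : R) : R := eps / (2 * Num.sqrt n%:R).

(* The cube S of Q(eps) with integer index vector j. *)
Definition in_cube (eps : R) (j : 'I_n -> int) (x : 'rV[R]_n) : bool :=
  [forall i, ((j i)%:~R * side eps <= x 0 i) && (x 0 i <= ((j i)%:~R + 1) * side eps)].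

Definition in_cube_nbhd (eps : R) (j : 'I_n -> int) (m : nat) (x : 'rV[R]_n) : Prop :=
  exists s : 'rV[R]_n, in_cube eps j s /\
    (\big[Num.max/0]_(i < n) `|x 0 i - s 0 i| <= m%:R * side eps).

Definition cubeX (X : {fset 'rV[R]_n}) (eps : R) (j : 'I_n -> int) : {fset 'rV[R]_n} :=
  [fset x in X | in_cube eps j x].
Definition cube_nbhdX (X : {fset 'rV[R]_n}) (eps : R) (j : 'I_n -> int) (m : nat)
  : {fset 'rV[R]_n} :=
  [fset x in X | `[< in_cube_nbhd eps j m x >]].

Definition mfrak : nat := `|Num.ceil (2 * Num.sqrt (n%:R : R))|%N.

Definition core (X : {fset 'rV[R]_n}) (eps : R) (k : nat) : {fset 'rV[R]_n} :=
  [fset p in X | ltn k #|` [fset q in X | edist p q <= eps]|].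
Definition noise (X : {fset 'rV[R]_n}) (eps : R) (k : nat) : {fset 'rV[R]_n} :=
  X `\` core X eps k.

End Defs.

From HB Require Import structures.
From mathcomp Require Import all_boot all_order all_algebra.
From mathcomp Require Import finmap.
From mathcomp Require Import boolp reals.
From mathcomp Require Import lra.
Set Implicit Arguments. Unset Strict Implicit. Unset Printing Implicit Defensive.
Import Order.TTheory GRing.Theory Num.Theory.
Local Open Scope ring_scope.
Local Open Scope fset_scope.

(* The side of a cube is eps/(2 sqrt n), so its diameter is eps/2.  Every
   point of S^1 is within twice the side of any point of S in each coordinate,
   hence within eps of it: the eps-ball of p in S_X contains S^1_X.  Conversely
   a point within eps of p differs from p by at most eps = 2 sqrt n * side
   <= mfrak * side in each coordinate, so the eps-ball of p lies in S^mfrak_X. *)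

Section Cubes.
Variables (R : realType) (n : nat).
Implicit Types (x y p q : 'rV[R]_n) (eps c : R) (j : 'I_n -> int).

Lemma edist_le_sqrt c x y : 0 <= c ->
  (forall i, `|x 0 i - y 0 i| <= c) -> edist x y <= Num.sqrt (n%:R) * c.
Proof.
move=> c0 hxy.
rewrite -(ger0_norm c0) -sqrtr_sqr -sqrtrM ?ler0n // ler_wsqrtr //.
rewrite mulr_natl -[X in _ *+ X]card_ord -sumr_const ler_sum // => i _.
by rewrite -(real_normK (num_real (x 0 i - y 0 i))) !expr2 ler_pM.
Qed.

Lemma coord_le_edist x y i : `|x 0 i - y 0 i| <= edist x y.
Proof.
rewrite /edist -sqrtr_sqr ler_wsqrtr // (bigD1 i) //= lerDl.
by apply: sumr_ge0 => l _; apply: sqr_ge0.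
Qed.

Lemma side_gt0 eps : (0 < n)%N -> 0 < eps -> 0 < side n eps.
Proof. by move=> n0 eps0; rewrite divr_gt0 // mulr_gt0 // sqrtr_gt0 ltr0n. Qed.

Lemma mul_sqrt_sideE eps : (0 < n)%N -> 2 * Num.sqrt (n%:R) * side n eps = eps.
Proof.
by move=> n0; rewrite mulrC divfK // gt_eqF // mulr_gt0 // sqrtr_gt0 ltr0n.
Qed.

Lemma sqrt_le_mfrak : 2 * Num.sqrt (n%:R : R) <= (mfrak R n)%:R.
Proof.
have sqrt_ge0 : 0 <= 2 * Num.sqrt (n%:R : R) by rewrite mulr_ge0 ?sqrtr_ge0.
rewrite /mfrak natr_absz ger0_norm; first exact: ceil_ge.
rewrite ceil_ge0; exact: lt_le_trans (ltrN10 R) sqrt_ge0.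
Qed.

Lemma cube_nbhd1_coord eps j p q :
  in_cube eps j p -> in_cube_nbhd eps j 1 q ->
  forall i, `|q 0 i - p 0 i| <= 2 * side n eps.
Proof.
move=> /forallP pS [t [/forallP tS /bigmax_leP[_ qt]]] i.
move: (pS i) (tS i) (qt i isT) => /andP[p1 p2] /andP[t1 t2].
rewrite mul1r !ler_norml mulrDl mul1r in p2 t2 * => /andP[h1 h2].
by apply/andP; split; lra.
Qed.

Lemma cube_nbhd_of_coord eps j m p q :
  in_cube eps j p -> 0 <= side n eps ->
  (forall i, `|q 0 i - p 0 i| <= m%:R * side n eps) -> in_cube_nbhd eps j m q.
Proof.
move=> pS s0 hq; exists p; split => //.
by apply/bigmax_leP; split => [|i _]; [rewrite mulr_ge0|apply: hq].
Qed.

Section Balls.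
Variables (X : {fset 'rV[R]_n}) (eps : R) (j : 'I_n -> int) (p : 'rV[R]_n).
Hypotheses (n_gt0 : (0 < n)%N) (eps_gt0 : 0 < eps) (pS : in_cube eps j p).

Let ball := [fset q in X | edist p q <= eps].

Lemma cube_nbhd1X_sub_ball : cube_nbhdX X eps j 1 `<=` ball.
Proof.
apply/fsubsetP => q; rewrite !inE /= => /andP[qX /asboolP qS]; rewrite qX /=.
have s0 := side_gt0 n_gt0 eps_gt0.
rewrite -(mul_sqrt_sideE eps n_gt0) mulrAC mulrC.
apply: edist_le_sqrt => [|i]; first by rewrite mulr_ge0 // ltW.
by rewrite distrC (cube_nbhd1_coord pS qS).
Qed.

Lemma ball_sub_cube_nbhdX : ball `<=` cube_nbhdX X eps j (mfrak R n).
Proof.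
apply/fsubsetP => q; rewrite !inE /= => /andP[qX hpq]; rewrite qX /=.
have s0 := side_gt0 n_gt0 eps_gt0.
apply/asboolP; apply: cube_nbhd_of_coord pS (ltW s0) _ => i.
apply: le_trans (ler_wpM2r (ltW s0) sqrt_le_mfrak); rewrite mul_sqrt_sideE //.
by rewrite distrC (le_trans (coord_le_edist p q i)).
Qed.

End Balls.
End Cubes.

Theorem mainTheorem1 (R : realType) (n : nat) (X : {fset 'rV[R]_n}) (k : nat)
    (eps : R) (j : 'I_n -> int) :
  (2 <= n)%N -> 0 < eps ->
  ((k < #|` cube_nbhdX X eps j 1|)%N ->
     cubeX X eps j `<=` core X eps k) /\
  (((#|` cube_nbhdX X eps j (mfrak R n)| <= k)%N \/ cubeX X eps j = fset0) ->
     cubeX X eps j `<=` noise X eps k).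
Proof.
move=> n2 eps0; have n0 : (0 < n)%N by apply: leq_trans n2.
split=> [hk | hS]; apply/fsubsetP => p; rewrite !inE /= => /andP[pX pS].
- rewrite pX /=; apply: leq_trans hk _.
  exact/fsubset_leq_card/cube_nbhd1X_sub_ball.
- case: hS => [hk | S0]; last by move: S0 => /fsetP/(_ p); rewrite !inE pX pS.
  rewrite pX andbT /= -leqNgt; apply: leq_trans hk.
  exact/fsubset_leq_card/ball_sub_cube_nbhdX.
Qed.
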